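(* Let $X\in\mathbb{R}^{n\times p}$ have rank $p$, let $P\in\mathbb{R}^{n\times n}$ be symmetric, let $S_K(P)$ be the subspace spanned by the eigenvectors of $P$ associated with its $K$ largest eigenvalues, and let $\mathcal{R}=\mathrm{col}(X)\cap S_K(P)$. Suppose $(\beta,\theta,\alpha)$ and $(\beta',\theta',\alpha')$, with $\beta,\theta,\beta',\theta'\in\mathbb{R}^p$ and $\alpha,\alpha'\in\mathbb{R}^n$, both satisfy $$X\beta+X\theta+\alpha = X\beta'+X\theta'+\alpha' \;(=\mathbb{E}Y)$$ and both satisfy the constraints $X\theta\in\mathcal{R}$, $X\beta\perp\mathcal{R}$, $\alpha\in S_K(P)$, $\alpha\perp\mathcal{R}$ (respectively with primes). Then $\beta=\beta'$, $\theta=\theta'$ and $\alpha=\alpha'$.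
   Context: This is the identifiability statement for the regression model with network effects $\mathbb{E}Y = X\beta+X\theta+\alpha$ subject to the stated constraints; $\mathrm{col}(X)$ denotes the column space of $X$. *)

From HB Require Import structures.
From mathcomp Require Import all_boot all_order all_algebra.
From mathcomp Require Import reals.
Set Implicit Arguments. Unset Strict Implicit. Unset Printing Implicit Defensive.
Import Order.TTheory GRing.Theory Num.Theory.
Local Open Scope ring_scope.

Section Defs.
Variable R : realType.

Definition dotv (n : nat) (u v : 'cV[R]_n) : R := (u^T *m v) 0 0.

Definition in_col (n p : nat) (X : 'M[R]_(n, p)) (v : 'cV[R]_n) : Prop :=
  exists b : 'cV[R]_p, v = X *m b.

(* (U, d) is an ordered spectral decomposition of P:
   U orthogonal, P = U diag(d) U^T, eigenvalues d sorted non-increasingly,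
   so column j of U is an eigenvector of P for the eigenvalue d_j, the
   j-th largest eigenvalue (counted with multiplicity). *)
Definition ordered_spectral_decomp (n : nat) (P U : 'M[R]_n) (d : 'rV[R]_n) : Prop :=
  [/\ U^T *m U = 1%:M,
      P = U *m diag_mx d *m U^T &
      forall i j : 'I_n, (i <= j)%N -> d 0 j <= d 0 i].

(* S_K(P): span of the eigenvectors (columns of U) associated with the K
   largest eigenvalues, i.e. the first K columns of U. *)
Definition in_SK (n K : nat) (U : 'M[R]_n) (v : 'cV[R]_n) : Prop :=
  exists c : 'cV[R]_n, (forall j : 'I_n, (K <= j)%N -> c j 0 = 0) /\ v = U *m c.

Definition in_Rsp (n p K : nat) (X : 'M[R]_(n, p)) (U : 'M[R]_n) (v : 'cV[R]_n) : Prop :=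
  in_col X v /\ in_SK K U v.

Definition perp_Rsp (n p K : nat) (X : 'M[R]_(n, p)) (U : 'M[R]_n) (v : 'cV[R]_n) : Prop :=
  forall w : 'cV[R]_n, in_Rsp K X U w -> dotv w v = 0.

Definition constraints (n p K : nat) (X : 'M[R]_(n, p)) (U : 'M[R]_n)
  (beta theta : 'cV[R]_p) (alpha : 'cV[R]_n) : Prop :=
  [/\ in_Rsp K X U (X *m theta), perp_Rsp K X U (X *m beta),
      in_SK K U alpha & perp_Rsp K X U alpha].
End Defs.

(** Subtracting the two decompositions, [db := X beta - X beta'],
    [dt := X theta - X theta'] and [da := alpha - alpha'] satisfy
    [db + dt + da = 0] and inherit the constraints, since these all describe
    linear subspaces.  Then [da = - (db + dt)] lies in [col(X)] and in
    [S_K(P)], hence in [R], while being orthogonal to [R]: so [da = 0].  Now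
    [dt = - db] lies in [R] and is orthogonal to it, so [dt = db = 0], and
    [X] is injective because it has full column rank.  Only the subspace
    [S_K(P)] matters, not the fact that it comes from a spectral
    decomposition of [P]. *)
From HB Require Import structures.
From mathcomp Require Import all_boot all_order all_algebra.
From mathcomp Require Import reals.
Import Order.TTheory GRing.Theory Num.Theory.
Local Open Scope ring_scope.

Section FullColumnRank.
Set Implicit Arguments.
Variables (F : fieldType) (m p : nat) (X : 'M[F]_(m, p)).

Lemma full_col_rank_mulmx_inj : \rank X = p -> injective (mulmx X : 'cV_p -> 'cV_m).
Proof.
move=> rkX b b' eqXb; apply: trmx_inj.
have freeXT : row_free X^T by rewrite /row_free mxrank_tr rkX.
by apply: (row_free_inj freeXT); rewrite -!trmx_mul eqXb.
Qed.

End FullColumnRank.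

Section Orthogonality.
Set Implicit Arguments.
Variable R : realType.

Lemma dotvDr n (w u v : 'cV[R]_n) : dotv w (u + v) = dotv w u + dotv w v.
Proof. by rewrite /dotv mulmxDr mxE. Qed.

Lemma dotvNr n (w u : 'cV[R]_n) : dotv w (- u) = - dotv w u.
Proof. by rewrite /dotv mulmxN mxE. Qed.

Lemma dotvv_eq0 n (v : 'cV[R]_n) : dotv v v = 0 -> v = 0.
Proof.
rewrite /dotv mxE => sum_sqr0.
have sqr_ge0 i : true -> 0 <= v^T 0 i * v i 0 by rewrite mxE -expr2 sqr_ge0.
apply/matrixP => i j; rewrite (ord1 j) mxE.
have := psumr_eq0P sqr_ge0 sum_sqr0 (i := i) isT.
by rewrite mxE -expr2 => /eqP; rewrite sqrf_eq0 => /eqP.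
Qed.

Variables (n p K : nat) (X : 'M[R]_(n, p)) (U : 'M[R]_n).

Lemma in_colB u v : in_col X u -> in_col X v -> in_col X (u - v).
Proof. by move=> [b ->] [b' ->]; exists (b - b'); rewrite mulmxBr. Qed.

Lemma in_SKB u v : in_SK K U u -> in_SK K U v -> in_SK K U (u - v).
Proof.
move=> [c [c_tail0 ->]] [c' [c'_tail0 ->]]; exists (c - c'); split.
  by move=> j leKj; rewrite !mxE c_tail0 // c'_tail0 // subr0.
by rewrite mulmxBr.
Qed.

Lemma in_RspB u v : in_Rsp K X U u -> in_Rsp K X U v -> in_Rsp K X U (u - v).
Proof. by move=> [colu SKu] [colv SKv]; split; [exact: in_colB | exact: in_SKB]. Qed.

Lemma perp_RspN v : perp_Rsp K X U v -> perp_Rsp K X U (- v).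
Proof. by move=> perpv w Rw; rewrite dotvNr perpv // oppr0. Qed.

Lemma perp_RspB u v :
  perp_Rsp K X U u -> perp_Rsp K X U v -> perp_Rsp K X U (u - v).
Proof. by move=> perpu perpv w Rw; rewrite dotvDr dotvNr perpu // perpv // subrr. Qed.

Lemma in_perp_Rsp_eq0 v : in_Rsp K X U v -> perp_Rsp K X U v -> v = 0.
Proof. by move=> Rv perpv; apply/dotvv_eq0/perpv. Qed.

End Orthogonality.

Theorem proposition1 (R : realType) (n p K : nat) (X : 'M[R]_(n, p))
  (P U : 'M[R]_n) (d : 'rV[R]_n)
  (beta theta beta' theta' : 'cV[R]_p) (alpha alpha' : 'cV[R]_n) :
  \rank X = p ->
  P^T = P ->
  ordered_spectral_decomp P U d ->
  X *m beta + X *m theta + alpha = X *m beta' + X *m theta' + alpha' ->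
  constraints K X U beta theta alpha ->
  constraints K X U beta' theta' alpha' ->
  [/\ beta = beta', theta = theta' & alpha = alpha'].
Proof.
move=> rkX _ _ eqEY [Rt Pb Sa Pa] [Rt' Pb' Sa' Pa'].
set db := X *m beta - X *m beta'; set dt := X *m theta - X *m theta'.
set da := alpha - alpha'.
have sum0 : db + dt + da = 0.
  by rewrite /db /dt /da [X *m beta - _ + _]addrACA -opprD addrACA -opprD eqEY subrr.
have da0 : da = 0.
  apply: (in_perp_Rsp_eq0 _ (perp_RspB Pa Pa')); split; last exact: in_SKB.
  exists (- (beta - beta' + (theta - theta'))).
  by rewrite mulmxN mulmxDr !mulmxBr (addr0_eq sum0).
have dt_opp_db : - db = dt by apply: addr0_eq; move: sum0; rewrite da0 addr0.
have dt0 : dt = 0.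
  apply: (in_perp_Rsp_eq0 (in_RspB Rt Rt')).
  by rewrite -/dt -dt_opp_db; apply/perp_RspN/perp_RspB.
have db0 : db = 0 by apply/eqP; rewrite -oppr_eq0 dt_opp_db dt0.
have [eqXb eqXt] : X *m beta = X *m beta' /\ X *m theta = X *m theta'.
  by split; apply: subr0_eq.
by split; [exact: full_col_rank_mulmx_inj eqXb | exact: full_col_rank_mulmx_inj eqXt
          | exact: subr0_eq].
Qed.
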